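(* Graphs $G=(U,\alpha)$ and $H=(V,\beta)$ are weakly disjoint if and only if they are $c$-disjoint for every cost function $c:U\times V\to[0,\infty)$.
   Context: A weight function on finite $U$ is $\alpha:U\times U\to\mathbb{R}$, $\alpha\ge0$, symmetric, summing to $1$; degree $p(u)=\sum_{u'}\alpha(u,u')$; a graph is $(U,\alpha)$. For graphs $(U,\alpha)$, $(V,\beta)$ with degrees $p,q$, a weight joining is a weight function $\gamma$ on $U\times V$ with degree $r(u,v)=\sum_{(u',v')}\gamma((u,v),(u',v'))$ such that $\sum_v r(u,v)=p(u)$, $\sum_u r(u,v)=q(v)$, $p(u)\sum_{\tilde v}\gamma((u,v),(u',\tilde v))=\alpha(u,u')r(u,v)$ and $q(v)\sum_{\tilde u}\gamma((u,v),(\tilde u,v'))=\beta(v,v')r(u,v)$ for all $u,u',v,v'$; a graph joining is $K=(U\times V,\gamma)$ with $\gamma$ a weight joining, with degree function $r_K$. The graphs are weakly disjoint if every graph joining has $r_K(u,v)=p(u)q(v)$. They are $c$-disjoint for $c:U\times V\to[0,\infty)$ if $\min_K\sum_{(u,v)}c(u,v)r_K(u,v)=\sum_{(u,v)}c(u,v)p(u)q(v)$, the minimum over all graph joinings $K$. *)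

From mathcomp Require Import all_boot all_order all_algebra.
Set Implicit Arguments. Unset Strict Implicit. Unset Printing Implicit Defensive.
Import Order.TTheory GRing.Theory Num.Theory.
Local Open Scope ring_scope.

Section Graphs.
Variable R : realFieldType.

Definition weight_fun (U : finType) (a : U -> U -> R) : Prop :=
  [/\ forall x y, 0 <= a x y,
      forall x y, a x y = a y x
    & \sum_(x : U) \sum_(y : U) a x y = 1].

Definition degree (U : finType) (a : U -> U -> R) (u : U) : R :=
  \sum_(u' : U) a u u'.

Definition weight_joining (U V : finType) (alpha : U -> U -> R)
    (beta : V -> V -> R) (gamma : (U * V)%type -> (U * V)%type -> R) : Prop :=
  [/\ weight_fun gamma,
      forall u, \sum_(v : V) degree gamma (u, v) = degree alpha u,
      forall v, \sum_(u : U) degree gamma (u, v) = degree beta v,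
      forall u u' v, degree alpha u * \sum_(v' : V) gamma (u, v) (u', v')
                     = alpha u u' * degree gamma (u, v)
    & forall u v v', degree beta v * \sum_(u' : U) gamma (u, v) (u', v')
                     = beta v v' * degree gamma (u, v)].

Definition weakly_disjoint (U V : finType) (alpha : U -> U -> R)
    (beta : V -> V -> R) : Prop :=
  forall gamma, weight_joining alpha beta gamma ->
    forall u v, degree gamma (u, v) = degree alpha u * degree beta v.

Definition joining_cost (U V : finType) (c : U -> V -> R)
    (gamma : (U * V)%type -> (U * V)%type -> R) : R :=
  \sum_(u : U) \sum_(v : V) c u v * degree gamma (u, v).

Definition product_cost (U V : finType) (alpha : U -> U -> R)
    (beta : V -> V -> R) (c : U -> V -> R) : R :=
  \sum_(u : U) \sum_(v : V) c u v * (degree alpha u * degree beta v).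

(* c-disjointness: min over graph joinings of the cost equals the product
   cost; "min = m" is unfolded as: m is attained by some joining and is a
   lower bound for the cost of every joining. *)
Definition c_disjoint (U V : finType) (alpha : U -> U -> R)
    (beta : V -> V -> R) (c : U -> V -> R) : Prop :=
  (exists gamma, weight_joining alpha beta gamma /\
       joining_cost c gamma = product_cost alpha beta c)
  /\ (forall gamma, weight_joining alpha beta gamma ->
       product_cost alpha beta c <= joining_cost c gamma).

End Graphs.

(* Weak disjointness makes every joining cost exactly the product cost, and
   the product weight [alpha x.1 y.1 * beta x.2 y.2] is itself a joining, so
   the minimum is attained.  Conversely, the indicator cost of a single pair
   (u, v) shows p(u) q(v) <= r(u, v) for every joining; since r and p q both
   have total mass 1, the inequality is an equality everywhere. *)
From mathcomp Require Import all_boot all_order all_algebra.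
Set Implicit Arguments. Unset Strict Implicit. Unset Printing Implicit Defensive.
Import Order.TTheory GRing.Theory Num.Theory.
Local Open Scope ring_scope.

Lemma ler_sum_eq (R : realDomainType) (I : finType) (f g : I -> R) :
  (forall i, f i <= g i) -> \sum_i f i = \sum_i g i -> forall i, f i = g i.
Proof.
move=> le_fg eq_sum i; apply/eqP; rewrite eq_sym -subr_eq0; apply/eqP.
have sum_gf0 : \sum_i (g i - f i) = 0 by rewrite sumrB eq_sum subrr.
have gf_ge0 j : true -> 0 <= g j - f j by rewrite subr_ge0 le_fg.
exact: (psumr_eq0P gf_ge0 sum_gf0).
Qed.

Lemma sum_degree (R : realFieldType) (W : finType) (a : W -> W -> R) :
  weight_fun a -> \sum_w degree a w = 1.
Proof. by case. Qed.

Section Joinings.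
Variables (R : realFieldType) (U V : finType).
Variables (alpha : U -> U -> R) (beta : V -> V -> R).

Definition prod_weight (x y : U * V) : R := alpha x.1 y.1 * beta x.2 y.2.

Lemma degree_prod_weight u v :
  degree prod_weight (u, v) = degree alpha u * degree beta v.
Proof. by rewrite /degree big_distrlr pair_bigA. Qed.

Lemma sum_prod_degree : weight_fun alpha -> weight_fun beta ->
  \sum_(x : U * V) degree alpha x.1 * degree beta x.2 = 1.
Proof.
move=> wa wb; rewrite -(pair_bigA _ (fun u v => degree alpha u * degree beta v)).
by rewrite -big_distrlr /= !sum_degree // mulr1.
Qed.

Lemma prod_weight_fun : weight_fun alpha -> weight_fun beta ->
  weight_fun prod_weight.
Proof.
move=> wa wb; have [a_ge0 a_sym _] := wa; have [b_ge0 b_sym _] := wb.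
split=> [x y | x y | ]; first exact: mulr_ge0.
  by rewrite /prod_weight a_sym b_sym.
rewrite -(sum_prod_degree wa wb); apply: eq_bigr => -[u v] _.
exact: degree_prod_weight.
Qed.

Lemma prod_weight_joining : weight_fun alpha -> weight_fun beta ->
  weight_joining alpha beta prod_weight.
Proof.
move=> wa wb; split=> [| u | v | u u' v | u v v']; first exact: prod_weight_fun.
- under eq_bigr do rewrite degree_prod_weight.
  by rewrite -mulr_sumr sum_degree // mulr1.
- under eq_bigr do rewrite degree_prod_weight.
  by rewrite -mulr_suml sum_degree // mul1r.
- by rewrite degree_prod_weight /prod_weight /= -mulr_sumr mulrCA.
- rewrite degree_prod_weight /prod_weight /= -mulr_suml -/(degree alpha u).
  by rewrite [RHS]mulrC mulrA [degree beta v * _]mulrC.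
Qed.

Lemma joining_cost_product (c : U -> V -> R) gamma :
  (forall u v, degree gamma (u, v) = degree alpha u * degree beta v) ->
  joining_cost c gamma = product_cost alpha beta c.
Proof.
by move=> r_eq; apply: eq_bigr => u _; apply: eq_bigr => v _; rewrite r_eq.
Qed.

Definition indicator_cost (x : U * V) (u : U) (v : V) : R := ((u, v) == x)%:R.

Lemma sum_indicator_cost x (f : U -> V -> R) :
  \sum_u \sum_v indicator_cost x u v * f u v = f x.1 x.2.
Proof.
rewrite pair_bigA (bigD1 x) //= /indicator_cost -surjective_pairing eqxx mul1r.
rewrite big1 ?addr0 // => -[u v] /negbTE ne_x; by rewrite ne_x mul0r.
Qed.

Lemma product_cost_indicator x :
  product_cost alpha beta (indicator_cost x) = degree alpha x.1 * degree beta x.2.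
Proof. exact: sum_indicator_cost. Qed.

Lemma joining_cost_indicator x gamma :
  joining_cost (indicator_cost x) gamma = degree gamma x.
Proof. by rewrite /joining_cost sum_indicator_cost -surjective_pairing. Qed.

End Joinings.

Theorem proposition3p2 (R : realFieldType) (U V : finType)
    (alpha : U -> U -> R) (beta : V -> V -> R) :
  weight_fun alpha -> weight_fun beta ->
  (weakly_disjoint alpha beta <->
   forall c : U -> V -> R, (forall u v, 0 <= c u v) -> c_disjoint alpha beta c).
Proof.
move=> wa wb; split=> [wd c _ | cd gamma jg u v].
  split=> [| gamma jg]; last by rewrite (joining_cost_product _ (wd gamma jg)).
  exists (prod_weight alpha beta); split; first exact: prod_weight_joining.
  exact/joining_cost_product/degree_prod_weight.
have le_pq_r x : degree alpha x.1 * degree beta x.2 <= degree gamma x.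
  have [_ /(_ gamma jg)] := cd (indicator_cost R x) (fun _ _ => ler0n _ _).
  by rewrite product_cost_indicator joining_cost_indicator.
have sum_r : \sum_x degree gamma x = 1 by case: jg => /sum_degree.
symmetry; apply: (ler_sum_eq le_pq_r _ (u, v)).
by rewrite sum_r sum_prod_degree.
Qed.
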